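(* Let $X$ be a finite-dimensional real vector space, ordered by a closed cone $X_+$ with non-empty interior. Then the dual cone $\mathcal{L}(X)'_+ := \{\varphi \in \mathcal{L}(X)' : \varphi(T) \ge 0 \text{ for all } T \in \mathcal{L}(X)_+\}$ is equal to the convex hull of the set $E := \{\varphi_{x,x'} : x \in X_+,\ x' \in X'_+\}$ (in particular this convex hull is closed).
   Context: A cone is a non-empty subset $X_+\subseteq X$ with $X_+ + X_+\subseteq X_+$, $\lambda X_+\subseteq X_+$ for $\lambda\ge 0$, and $X_+\cap(-X_+)=\{0\}$. The dual cone is $X'_+ := \{x' \in X' : \langle x', x\rangle \ge 0 \text{ for all } x \in X_+\}$. $\mathcal{L}(X)$ is the space of linear maps $X\to X$ and $\mathcal{L}(X)_+ := \{T: TX_+ \subseteq X_+\}$. For $x \in X$, $x' \in X'$, the functional $\varphi_{x,x'}$ on $\mathcal{L}(X)$ is defined by $\langle \varphi_{x,x'}, M\rangle := \langle x', Mx\rangle = \operatorname{trace}(M(x\otimes x'))$, where $(x\otimes x')y := \langle x', y\rangle x$. *)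

From HB Require Import structures.
From mathcomp Require Import all_boot all_order all_algebra.
From mathcomp Require Import all_classical all_reals all_analysis.
Set Implicit Arguments. Unset Strict Implicit. Unset Printing Implicit Defensive.
Import Order.TTheory GRing.Theory Num.Theory.
Import numFieldNormedType.Exports.
Local Open Scope classical_set_scope.
Local Open Scope ring_scope.

(* The finite-dimensional real vector space X is modelled as 'rV[R]_n
   (every n-dimensional real vector space is linearly isomorphic to it),
   with its Euclidean (product) topology.
   X'      := 'Hom(X, R^o)          (linear functionals on X)
   L(X)    := 'End(X)               (linear maps X -> X)
   L(X)'   := 'Hom('End(X), R^o)    (linear functionals on L(X)) *)

Definition is_cone (R : realType) (V : lmodType R) (K : set V) : Prop :=
  [/\ K !=set0,
      (forall x y, K x -> K y -> K (x + y)),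
      (forall (l : R) x, 0 <= l -> K x -> K (l *: x)) &
      (forall x, K x -> K (- x) -> x = 0)].

Definition dual_cone (R : realType) (V : vectType R) (K : set V)
  : set 'Hom(V, R^o) :=
  [set f | forall x, K x -> 0 <= f x].

Definition pos_ops (R : realType) (V : vectType R) (K : set V)
  : set 'End(V) :=
  [set T | forall x, K x -> K (T x)].

Definition E_set (R : realType) (V : vectType R) (K : set V)
  : set 'Hom('End(V), R^o) :=
  [set phi | exists x (x' : 'Hom(V, R^o)),
     [/\ K x, dual_cone K x' & forall M : 'End(V), phi M = x' (M x)]].

Definition conv_hull (R : realType) (W : lmodType R) (E : set W) : set W :=
  [set w | exists (k : nat) (c : 'I_k -> R) (e : 'I_k -> W),
     [/\ (forall i, 0 <= c i), \sum_(i < k) c i = 1,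
         (forall i, E (e i)) & w = \sum_(i < k) c i *: e i]].

From HB Require Import structures.
From mathcomp Require Import all_boot all_order all_algebra.
From mathcomp Require Import all_classical all_reals all_analysis.
From mathcomp Require Import ring lra zify.
Import Order.TTheory GRing.Theory Num.Theory.
Import numFieldNormedType.Exports.
Local Open Scope classical_set_scope.
Local Open Scope ring_scope.

(* Coordinates: X is 'rV_n with the standard pairing dot, which identifies
   X' with X; an operator is a matrix acting on the right, and a functional
   on operators is a matrix paired entrywise with it (dot of the
   flattenings mxvec).  Then phi_{x,x'} becomes the rank-one tensor x (x) y
   and E generates the convex cone C of finite sums of such tensors.  The
   inclusion of the convex hull of E in the dual of L(X)_+ is immediate;
   the converse is proved by duality:
   1. C is closed.  K' contains an order unit g for K (K' is generating as
      K is closed and pointed) and an interior point u of K controls the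
      elements of K'; so the part of C below a level of phi_{g,u} is, by
      Caratheodory's theorem, the continuous image of a compact set.
   2. If a matrix A pairing nonnegatively with all positive operators lay
      outside C, a functional separating A from the closed convex cone C
      would, by the bipolar theorem K'' = K, be a positive operator
      pairing negatively with A. *)

Section Pairing.
Context {R : realType}.

Definition dot {m} (x y : 'rV[R]_m) : R := \sum_(i < m) x ord0 i * y ord0 i.

Lemma dotC {m} (x y : 'rV[R]_m) : dot x y = dot y x.
Proof. by apply: eq_bigr => i _; rewrite mulrC. Qed.

Lemma dotDl {m} (x y z : 'rV[R]_m) : dot (x + y) z = dot x z + dot y z.
Proof. by rewrite /dot -big_split; apply: eq_bigr => i _; rewrite mxE mulrDl. Qed.

Lemma dotDr {m} (x y z : 'rV[R]_m) : dot z (x + y) = dot z x + dot z y.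
Proof. by rewrite dotC dotDl !(dotC z). Qed.

Lemma dotZl {m} a (x y : 'rV[R]_m) : dot (a *: x) y = a * dot x y.
Proof. by rewrite /dot mulr_sumr; apply: eq_bigr => i _; rewrite mxE mulrA. Qed.

Lemma dotZr {m} a (x y : 'rV[R]_m) : dot x (a *: y) = a * dot x y.
Proof. by rewrite dotC dotZl dotC. Qed.

Lemma dotNl {m} (x y : 'rV[R]_m) : dot (- x) y = - dot x y.
Proof. by rewrite -scaleN1r dotZl mulN1r. Qed.

Lemma dotNr {m} (x y : 'rV[R]_m) : dot x (- y) = - dot x y.
Proof. by rewrite dotC dotNl dotC. Qed.

Lemma dotBr {m} (x y z : 'rV[R]_m) : dot z (x - y) = dot z x - dot z y.
Proof. by rewrite dotDr dotNr. Qed.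

Lemma dot_expand {m} (w d : 'rV[R]_m) t :
  dot (w + t *: d) (w + t *: d) = dot w w + 2 * t * dot w d + t ^+ 2 * dot d d.
Proof. rewrite !dotDl !dotDr !dotZl !dotZr (dotC d w); ring. Qed.

Lemma dot0l {m} (y : 'rV[R]_m) : dot 0 y = 0.
Proof. by rewrite /dot big1 // => i _; rewrite mxE mul0r. Qed.

Lemma dot0r {m} (y : 'rV[R]_m) : dot y 0 = 0.
Proof. by rewrite dotC dot0l. Qed.

Lemma dot_sumr {m} N (x : 'rV[R]_m) (f : 'I_N -> 'rV[R]_m) :
  dot x (\sum_(k < N) f k) = \sum_(k < N) dot x (f k).
Proof.
elim: N f => [|N IH] f; first by rewrite !big_ord0 dot0r.
by rewrite !big_ord_recr /= dotDr IH.
Qed.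

Lemma dot_delta {m} (x : 'rV[R]_m) i : dot x (delta_mx 0 i) = x ord0 i.
Proof.
rewrite /dot (bigD1 i) //= mxE eqxx mulr1 big1 ?addr0 // => j /negbTE hj.
by rewrite mxE eq_sym hj mulr0.
Qed.

Lemma dot_mulmx {m} (a b : 'rV[R]_m) : dot a b = (a *m b^T) ord0 ord0.
Proof. by rewrite /dot !mxE; apply: eq_bigr => j _; rewrite mxE. Qed.

Lemma sqr_coord_le_dot {m} (x : 'rV[R]_m) i : x ord0 i ^+ 2 <= dot x x.
Proof.
rewrite /dot (bigD1 i) //= -expr2 lerDl.
by apply: sumr_ge0 => j _; rewrite -expr2 sqr_ge0.
Qed.

Lemma dotxx_ge0 {m} (x : 'rV[R]_m) : 0 <= dot x x.
Proof. by rewrite /dot; apply: sumr_ge0 => i _; rewrite -expr2 sqr_ge0. Qed.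

Lemma dotxx_eq0 {m} (x : 'rV[R]_m) : dot x x = 0 -> x = 0.
Proof.
move=> x0; apply/rowP => i; rewrite mxE; apply/eqP; rewrite -sqrf_eq0.
by rewrite eq_le sqr_ge0 andbT -x0 sqr_coord_le_dot.
Qed.

Lemma continuous_sum (T : topologicalType) (V : normedModType R) N
    (f : 'I_N -> T -> V) :
  (forall i, continuous (f i)) -> continuous (fun x => \sum_(i < N) f i x).
Proof.
elim: N f => [|N IH] f fc.
  by under eq_fun do rewrite big_ord0; exact: cst_continuous.
under eq_fun do rewrite big_ord_recr /=.
by move=> x; apply: cvgD; [exact: (IH (fun i => f (widen_ord (leqnSn N) i))) | exact: fc].
Qed.

Lemma entry_continuous {T : topologicalType} {m} (i : 'I_m) :
  continuous (fun z : 'rV[T]_m => z ord0 i).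
Proof.
move=> z A /= zA; exists (fun k l => if l == i then A else setT).
  by move=> k l; case: eqP => [->|_]; [rewrite (ord1 k) | exact: filterT].
by move=> w /(_ ord0 i); rewrite eqxx.
Qed.

Lemma entry_comp_continuous {T U : topologicalType} {m} (f : T -> 'rV[U]_m) i :
  continuous f -> continuous (fun t => f t ord0 i).
Proof. by move=> fc t; exact: (continuous_comp (fc t) (entry_continuous i (f t))). Qed.

Lemma dot_continuous (T : topologicalType) m (f g : T -> 'rV[R]_m) :
  (forall i, continuous (fun t => f t ord0 i)) ->
  (forall i, continuous (fun t => g t ord0 i)) ->
  continuous (fun t => dot (f t) (g t)).
Proof. by move=> fc gc; apply: continuous_sum => i t; exact: cvgM (fc i t) (gc i t). Qed.

Lemma dot_continuousl {m} (y : 'rV[R]_m) : continuous (fun x => dot y x).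
Proof.
apply: dot_continuous => i x; first exact: cst_continuous.
exact: entry_continuous.
Qed.

Lemma dist2_continuous {m} (p : 'rV[R]_m) :
  continuous (fun c : 'rV[R]_m => dot (p - c) (p - c)).
Proof.
have pB i : continuous (fun c : 'rV[R]_m => (p - c) ord0 i).
  under eq_fun do rewrite !mxE.
  by move=> c; exact: (cvgB (cvg_cst _) (entry_continuous i c)).
by apply: dot_continuous => i; exact: pB.
Qed.

Lemma dist_sublevel_compact {m} (p : 'rV[R]_m) r :
  compact [set c | dot (p - c) (p - c) <= r].
Proof.
pose box i := `[p ord0 i - (r + 1), p ord0 i + (r + 1)]%classic.
have boxc : compact [set v : 'rV[R]_m | forall i, box i (v ord0 i)].
  by apply: rV_compact => i; exact: segment_compact.
apply: subclosed_compact _ boxc _.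
  exact: (continuous_closedP _).1 (dist2_continuous p) _ (@closed_le R r).
move=> c /= hc i; rewrite /box /= in_itv /=.
have := le_trans (sqr_coord_le_dot (p - c) i) hc; rewrite !mxE => h.
have r0 : 0 <= r by apply: le_trans hc; exact: dotxx_ge0.
apply/andP; split; nra.
Qed.

End Pairing.

Section Tensor.
Context {R : realType} {n : nat}.

(* The rank-one tensor x (x) y, flattened into R^(n*n).  Paired with the
   flattening of a matrix M it gives <x M, y>, so it represents the
   functional M |-> <x', M x> on operators. *)
Definition tensor (x y : 'rV[R]_n) : 'rV[R]_(n * n) :=
  mxvec (\matrix_(i, j) (x ord0 i * y ord0 j)).

Lemma dot_mxvec (M A : 'M[R]_n) :
  dot (mxvec M) (mxvec A) = \sum_i \sum_j M i j * A i j.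
Proof.
rewrite /dot (reindex _ (curry_mxvec_bij n n)) /= pair_big.
by apply: eq_bigr => -[i j] _ /=; rewrite !mxvecE.
Qed.

Lemma dot_tensor (M : 'M[R]_n) x y : dot (mxvec M) (tensor x y) = dot (x *m M) y.
Proof.
rewrite dot_mxvec /dot; under [RHS]eq_bigr => j _ do rewrite mxE mulr_suml.
rewrite exchange_big /=; apply: eq_bigr => i _; apply: eq_bigr => j _.
by rewrite mxE; ring.
Qed.

Lemma dot_tensors a b x y : dot (tensor a b) (tensor x y) = dot a x * dot b y.
Proof.
rewrite [tensor a b]/tensor dot_tensor.
have -> : x *m \matrix_(i, j) (a ord0 i * b ord0 j) = dot x a *: b.
  apply/rowP => j; rewrite !mxE /dot mulr_suml; apply: eq_bigr => i _.
  by rewrite mxE mulrA.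
by rewrite dotZl dotC.
Qed.

Lemma tensorZl (l : R) x y : tensor (l *: x) y = l *: tensor x y.
Proof.
rewrite /tensor -linearZ /=; congr mxvec; apply/matrixP => i j.
by rewrite !mxE mulrA.
Qed.

Lemma tensor_rescale (l : R) x y : l != 0 -> tensor (l *: x) (l^-1 *: y) = tensor x y.
Proof. by move=> l0; congr mxvec; apply/matrixP => i j; rewrite !mxE; field. Qed.

Lemma tensor0r x : tensor x 0 = 0.
Proof.
by apply/eqP; rewrite mxvec_eq0; apply/eqP/matrixP => i j; rewrite !mxE mulr0.
Qed.

Lemma tensor_continuous (T : topologicalType) (f g : T -> 'rV[R]_n) :
  continuous f -> continuous g -> continuous (fun t => tensor (f t) (g t)).
Proof.
move=> fc gc; have tensorE x y :
    tensor x y = \sum_a \sum_b (x ord0 a * y ord0 b) *: mxvec (delta_mx a b : 'M[R]_n).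
  rewrite /tensor {1}(matrix_sum_delta (\matrix_(i, j) (x ord0 i * y ord0 j))).
  rewrite linear_sum; apply: eq_bigr => a _; rewrite linear_sum.
  by apply: eq_bigr => b _; rewrite linearZ /= mxE.
under eq_fun do rewrite tensorE.
apply: continuous_sum => a; apply: continuous_sum => b t.
apply: cvgZ; last exact: cvg_cst.
by apply: cvgM;
  [exact: (entry_comp_continuous _ a fc t) | exact: (entry_comp_continuous _ b gc t)].
Qed.

End Tensor.

Lemma first_order_nonneg (R : realFieldType) (a b : R) : 0 <= b ->
  (forall t, 0 < t -> t <= 1 -> 0 <= t * (2 * a + t * b)) -> 0 <= a.
Proof.
move=> b0 h; rewrite leNgt; apply/negP => a0.
pose t := - a / (b - a).
have ba : 0 < b - a by lra.
have ht : t * (b - a) = - a by rewrite /t mulfVK // gt_eqF.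
have t0 : 0 < t by rewrite /t divr_gt0 // oppr_gt0.
have t1 : t <= 1 by rewrite /t ler_pdivrMr // mul1r; lra.
have := h t t0 t1; nra.
Qed.

Section ConeSeparation.
Context {R : realType} {m : nat} {C : set 'rV[R]_m}.
Hypotheses (Ccl : closed C) (C0 : C 0)
  (CD : forall a b, C a -> C b -> C (a + b))
  (CZ : forall t a, 0 <= t -> C a -> C (t *: a)).

Lemma nearest_point p : exists2 q, C q &
  forall c, C c -> dot (p - q) (p - q) <= dot (p - c) (p - c).
Proof.
pose f c := dot (p - c) (p - c).
pose D := [set c | f c <= f 0] `&` C.
have Dc : compact D by apply: compact_closedI => //; exact: dist_sublevel_compact.
have D0 : D !=set0 by exists 0; split => //=.
have [q /set_mem [fq Cq] qmin] :=
  EVT_min_rV D0 Dc (continuous_subspaceT (dist2_continuous p)).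
exists q => // c Cc.
have [fc0|/ltW] := leP (f c) (f 0); first by apply: qmin; rewrite inE.
exact: le_trans.
Qed.

Lemma nearest_point_cone {p q} : C q ->
  (forall c, C c -> dot (p - q) (p - q) <= dot (p - c) (p - c)) ->
  (forall c, C c -> 0 <= dot (q - p) c) /\ dot (q - p) q = 0.
Proof.
move=> Cq qmin; set w := q - p.
have normal c : C c -> 0 <= dot w (c - q).
  move=> Cc; apply: (@first_order_nonneg _ _ _ (dotxx_ge0 (c - q))) => t t0 t1.
  have Ct : C (q + t *: (c - q)).
    have -> : q + t *: (c - q) = (1 - t) *: q + t *: c.
      by apply/rowP => j; rewrite !mxE; ring.
    by apply: CD; apply: CZ => //; lra.
  have := qmin _ Ct.
  have -> : p - (q + t *: (c - q)) = - (w + t *: (c - q)).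
    by apply/rowP => j; rewrite /w !mxE; ring.
  have -> : p - q = - w by rewrite /w opprB.
  rewrite !dotNl !dotNr !opprK dot_expand; lra.
have wq : dot w q = 0.
  have := normal _ C0; have := normal _ (CZ 2 _ (ler0n _ 2) Cq).
  have -> : 2 *: q - q = q by apply/rowP => j; rewrite !mxE; ring.
  rewrite sub0r dotNr; lra.
by split => // c Cc; have := normal _ Cc; rewrite dotBr wq subr0.
Qed.

Lemma cone_separation p : ~ C p ->
  exists w, (forall c, C c -> 0 <= dot w c) /\ dot w p < 0.
Proof.
move=> Cp; have [q Cq qmin] := nearest_point p.
have [wC wq] := nearest_point_cone Cq qmin.
exists (q - p); split => //.
rewrite -{2}(subKr q p) dotBr wq sub0r oppr_lt0 lt_neqAle dotxx_ge0 andbT eq_sym.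
apply/eqP => /dotxx_eq0/eqP; rewrite subr_eq0 => /eqP qp.
by apply: Cp; rewrite -qp.
Qed.

End ConeSeparation.

Lemma dominant_dependence {R : realFieldType} {m N : nat} (s : 'I_N.+1 -> 'rV[R]_m) :
  (m <= N)%N ->
  exists v : 'I_N.+1 -> R, exists kk,
    [/\ 0 < v kk, forall k, v k <= v kk & \sum_k v k *: s k = 0].
Proof.
move=> mN; pose M : 'M[R]_(N.+1, m) := \matrix_(k, j) s k ord0 j.
have : ~~ row_free M by apply/negP => /eqP rkM; have := rank_leq_col M; lia.
rewrite -kermx_eq0 => /rowV0Pn [w /sub_kermxP wM w0].
have ws : \sum_k w ord0 k *: s k = 0.
  rewrite -[RHS]wM mulmx_sum_row; apply: eq_bigr => k _.
  by congr (_ *: _); apply/rowP => j; rewrite !mxE.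
have [k1 wk1] : exists k1, w ord0 k1 != 0.
  apply/existsP; move: w0; apply: contraNT; rewrite negb_exists => /forallP h.
  by apply/eqP/rowP => k; rewrite mxE; exact: (eqP (negbNE (h k))).
pose v k := w ord0 k / w ord0 k1.
have [kk _ vmax] := @arg_maxP _ _ _ k1 xpredT v isT.
exists v, kk; split => [|k|].
- by apply: lt_le_trans (vmax k1 isT); rewrite /v divff.
- exact: vmax.
- under eq_bigr => k _ do rewrite /v mulrC -scalerA.
  by rewrite -scaler_sumr ws scaler0.
Qed.

Section Caratheodory.
Context {R : realFieldType} {m : nat} {S : set 'rV[R]_m}.
Hypotheses (S0 : S 0) (SZ : forall t a, 0 <= t -> S a -> S (t *: a)).

Lemma pad_family N (s : 'I_N -> 'rV[R]_m) : (N <= m)%N -> (forall k, S (s k)) ->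
  exists2 s' : 'I_m -> 'rV[R]_m, (forall k, S (s' k)) & \sum_k s' k = \sum_k s k.
Proof.
move=> Nm Ss; exists (fun k : 'I_m => oapp s 0 (insub (val k))).
  by move=> k; case: insubP => [j _ _|_] /=; [exact: Ss | exact: S0].
rewrite (bigID (fun k : 'I_m => (k < N)%N)) /= [X in _ + X]big1 ?addr0; last first.
  by move=> k; rewrite -leqNgt => Nk; rewrite insubF // ltnNge Nk.
by rewrite (big_ord_narrow Nm); apply: eq_bigr => k _; rewrite /= valK.
Qed.

Lemma caratheodory_step {N} (s : 'I_N.+1 -> 'rV[R]_m) : (m <= N)%N ->
  (forall k, S (s k)) ->
  exists2 s' : 'I_N -> 'rV[R]_m, (forall k, S (s' k)) & \sum_k s' k = \sum_k s k.
Proof.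
move=> mN Ss; have [v [kk [vkk vmax vs]]] := dominant_dependence s mN.
pose c k := 1 - v k / v kk.
have c0 k : 0 <= c k by rewrite subr_ge0 ler_pdivrMr // mul1r.
have ckk : c kk = 0 by rewrite /c divff ?subrr // gt_eqF.
have sumc : \sum_k c k *: s k = \sum_k s k.
  under eq_bigr do rewrite scalerBl scale1r.
  rewrite sumrB; under [X in _ - X]eq_bigr => k _ do rewrite mulrC -scalerA.
  by rewrite -scaler_sumr vs scaler0 subr0.
exists (fun k => c (lift kk k) *: s (lift kk k)); first by move=> k; apply: SZ.
by rewrite -sumc [RHS](bigD1_ord kk) //= ckk scale0r add0r.
Qed.

Lemma caratheodory N (s : 'I_N -> 'rV[R]_m) : (forall k, S (s k)) ->
  exists2 s' : 'I_m -> 'rV[R]_m, (forall k, S (s' k)) & \sum_k s' k = \sum_k s k.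
Proof.
elim: N s => [|N IH] s Ss; first exact: pad_family.
have [Nm|mN] := leqP N.+1 m; first exact: pad_family.
have [s1 Ss1 <-] := caratheodory_step s mN Ss.
exact: IH.
Qed.

End Caratheodory.

Lemma finite_spanning_family {F : fieldType} {m : nat} (S : set 'rV[F]_m) :
  exists k (B : 'M[F]_(k, m)), (forall i, S (row i B)) /\ forall v, S v -> (v <= B)%MS.
Proof.
have grow d k (B : 'M[F]_(k, m)) : (forall i, S (row i B)) -> (m - \rank B)%N = d ->
    exists k' (B' : 'M[F]_(k', m)),
      (forall i, S (row i B')) /\ forall v, S v -> (v <= B')%MS.
  elim/ltn_ind: d k B => d IH k B SB dB.
  have [spans|] := pselect (forall v, S v -> (v <= B)%MS); first by exists k, B.
  move=> /existsNP [w /not_implyP [Sw wB]].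
  have rlt : (\rank B < \rank (col_mx B w))%N.
    rewrite -addsmxE; apply: rank_ltmx; rewrite ltmxE addsmxSl /=.
    by apply/negP => Bw; apply: wB; exact: submx_trans (addsmxSr B w) Bw.
  apply: (IH _ _ _ (col_mx B w)) erefl; first by have := rank_leq_col (col_mx B w); lia.
  move=> i; rewrite -(splitK i).
  by case: (fintype.split i) => j /=; rewrite ?rowKu ?rowKd ?row_id.
by apply: (grow m 0%N 0); [case | rewrite mxrank0 subn0].
Qed.

Section FiniteSums.
Context {V : zmodType}.

Definition finsums (S : set V) : set V :=
  [set v | exists N (s : 'I_N -> V), (forall k, S (s k)) /\ v = \sum_k s k].

Variable S : set V.

Lemma finsums0 : finsums S 0.
Proof. by exists 0%N, (fun=> 0); split; [case | rewrite big_ord0]. Qed.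

Lemma finsums_gen x : S x -> finsums S x.
Proof. by move=> Sx; exists 1%N, (fun=> x); rewrite big_ord1. Qed.

Lemma finsumsD a b : finsums S a -> finsums S b -> finsums S (a + b).
Proof.
move=> [N1 [s1 [Ss1 ->]]] [N2 [s2 [Ss2 ->]]].
exists (N1 + N2)%N,
  (fun k => match fintype.split k with inl i => s1 i | inr j => s2 j end).
split; first by move=> k; case: (fintype.split k).
rewrite big_split_ord; congr (_ + _); apply: eq_bigr => i _.
  by rewrite (unsplitK (inl i) : fintype.split (lshift N2 i) = inl i).
by rewrite (unsplitK (inr i) : fintype.split (rshift N1 i) = inr i).
Qed.

End FiniteSums.

Lemma finsumsZ {R : pzRingType} {V : lmodType R} (S : set V) t a :
  (forall x, S x -> S (t *: x)) -> finsums S a -> finsums S (t *: a).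
Proof.
move=> SZ [N [s [Ss ->]]]; exists N, (fun k => t *: s k).
by split; [move=> k; exact: SZ | rewrite scaler_sumr].
Qed.

Section Cones.
Context {R : realType} {n : nat} (K : set 'rV[R]_n).
Hypotheses (K0 : K 0) (KD : forall x y, K x -> K y -> K (x + y))
  (KZ : forall (l : R) x, 0 <= l -> K x -> K (l *: x))
  (Kpt : forall x, K x -> K (- x) -> x = 0) (Kcl : closed K).

Definition dualK := [set y : 'rV[R]_n | forall x, K x -> 0 <= dot x y].

Lemma dualK0 : dualK 0.
Proof. by move=> x _; rewrite dot0r. Qed.

Lemma dualKD a b : dualK a -> dualK b -> dualK (a + b).
Proof. by move=> ha hb x Kx; rewrite dotDr addr_ge0 //; [exact: ha | exact: hb]. Qed.

Lemma dualKZ (l : R) a : 0 <= l -> dualK a -> dualK (l *: a).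
Proof. by move=> l0 ha x Kx; rewrite dotZr mulr_ge0 //; exact: ha. Qed.

Lemma dualK_closed : closed dualK.
Proof.
have -> : dualK = \bigcap_(x in K) [set y | 0 <= dot x y].
  by apply/seteqP; split => y h x Kx; exact: h.
apply: closed_bigI => x _.
by have := (continuous_closedP _).1 (dot_continuousl x) _ (@closed_ge R 0).
Qed.

Lemma bipolar x : ~ K x -> exists2 y, dualK y & dot x y < 0.
Proof.
move=> Kx; have [w [wK wx]] := cone_separation Kcl K0 KD KZ x Kx.
by exists w; [move=> z Kz; rewrite dotC; exact: wK | rewrite dotC].
Qed.

(* Since K is pointed, nothing but 0 is orthogonal to K*. *)
Lemma dualK_perp z : (forall y, dualK y -> dot z y = 0) -> z = 0.
Proof.
move=> zperp; apply: Kpt; apply/not_notP => nK; have [y Ky] := bipolar _ nK.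
  by rewrite zperp // ltxx.
by rewrite dotNl zperp // oppr0 ltxx.
Qed.

Definition dualK_diff :=
  [set v : 'rV[R]_n | exists a b, [/\ dualK a, dualK b & v = a - b]].

Lemma dualK_diffD a b : dualK_diff a -> dualK_diff b -> dualK_diff (a + b).
Proof.
move=> [a1 [a2 [h1 h2 ->]]] [b1 [b2 [h3 h4 ->]]].
exists (a1 + b1), (a2 + b2); split; try exact: dualKD.
by rewrite opprD addrACA.
Qed.

Lemma dualK_diffZ (l : R) a : dualK_diff a -> dualK_diff (l *: a).
Proof.
move=> [a1 [a2 [h1 h2 ->]]]; have [l0|l0] := leP 0 l.
  exists (l *: a1), (l *: a2).
  by split; [exact: dualKZ | exact: dualKZ | rewrite scalerBr].
exists ((- l) *: a2), ((- l) *: a1); split; try (apply: dualKZ => //; lra).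
by apply/rowP => j; rewrite !mxE; ring.
Qed.

Lemma dualK_generating v : dualK_diff v.
Proof.
have [k [B [BK Bspan]]] := finite_spanning_family dualK.
have Bfull : row_full B.
  suff : row_free B^T by rewrite /row_free /row_full mxrank_tr.
  rewrite -kermx_eq0; apply: contraT => /rowV0Pn [z /sub_kermxP zB z0].
  suff z_0 : z = 0 by rewrite z_0 eqxx in z0.
  apply: dualK_perp => y /Bspan /submxP [c ->].
  by rewrite dot_mulmx trmx_mul mulmxA zB mul0mx mxE.
have /submxP [c ->] := submx_full v Bfull.
rewrite mulmx_sum_row; apply: (big_ind dualK_diff).
- by exists 0, 0; split; rewrite ?subr0 //; exact: dualK0.
- exact: dualK_diffD.
- move=> i _; apply: dualK_diffZ; exists (row i B), 0.
  by split; [exact: BK | exact: dualK0 | rewrite subr0].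
Qed.

Lemma dualK_order_unit :
  exists2 g, dualK g & forall x, K x -> forall i, `|x ord0 i| <= dot x g.
Proof.
have [f hf] := fin_all_exists (fun i : 'I_n => dualK_generating (delta_mx 0 i)).
have [a hab] := fin_all_exists hf.
exists (\sum_i (f i + a i)).
  elim/big_ind: _ => [|b c|i _]; [exact: dualK0 | exact: dualKD |].
  by case: (hab i) => h1 h2 _; exact: dualKD.
move=> x Kx i; rewrite dot_sumr (bigD1 i) //=.
have [h1 h2 h3] := hab i.
have xi : x ord0 i = dot x (f i) - dot x (a i) by rewrite -dotBr -h3 dot_delta.
have rest : 0 <= \sum_(j < n | j != i) dot x (f j + a j).
  apply: sumr_ge0 => j _; have [q1 q2 _] := hab j.
  by rewrite dotDr addr_ge0 //; [exact: q1 | exact: q2].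
have := h1 x Kx; have := h2 x Kx.
by rewrite dotDr xi ler_norml => a_pos f_pos; apply/andP; split; lra.
Qed.

Lemma interior_dominates : interior K !=set0 -> exists u e, [/\ K u, 0 < e &
  forall y, dualK y -> forall i, e * `|y ord0 i| <= dot u y].
Proof.
case=> u /= Ku.
have [e e0 he] := (nbhs_ballP u K).1 Ku.
have e2 : 0 < e / 2 by rewrite divr_gt0.
exists u, (e / 2); split => // [|y Ky i]; first exact: nbhs_singleton Ku.
have Kshift s : `|s| <= e / 2 -> K (u + s *: delta_mx 0 i).
  move=> hs; apply: he; split => // a j; rewrite /ball /= !mxE.
  rewrite opprD addrA subrr add0r normrN normrM.
  case: (_ && _) => /=; rewrite ?normr1 ?normr0 ?mulr1 ?mulr0 //.
  by apply: (le_lt_trans hs); rewrite ltr_pdivrMr // ltr_pMr // ltr1n.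
have := Ky _ (Kshift (e / 2) _); have := Ky _ (Kshift (- (e / 2)) _).
rewrite normrN ger0_norm ?(ltW e2) // => /(_ (lexx _)) hm /(_ (lexx _)) hp.
rewrite !dotDl !dotZl !(dotC (delta_mx 0 i) y) dot_delta in hm hp.
case: (lerP 0 (y ord0 i)) => h; [rewrite ger0_norm // | rewrite ltr0_norm //]; nra.
Qed.

Definition tensors :=
  [set w : 'rV[R]_(n * n) | exists x y, [/\ K x, dualK y & w = tensor x y]].

Definition tensor_cone := finsums tensors.

Lemma tensors0 : tensors 0.
Proof. by exists 0, 0; split; [exact: K0 | exact: dualK0 | rewrite tensor0r]. Qed.

Lemma tensorsZ t w : 0 <= t -> tensors w -> tensors (t *: w).
Proof.
move=> t0 [x [y [Kx Ky ->]]]; exists (t *: x), y.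
by split; [exact: KZ | exact: Ky | rewrite tensorZl].
Qed.

Definition box (b : R) := [set v : 'rV[R]_n | forall i, `[- b, b]%classic (v ord0 i)].

Lemma boxP b v : box b v <-> forall i, `|v ord0 i| <= b.
Proof. by split => h i; have := h i; rewrite /= in_itv /= ler_norml. Qed.

Definition families (A : set 'rV[R]_n) :=
  [set z : 'rV['rV[R]_n]_(n * n) | forall k, A (z ord0 k)].

Definition sum_tensors (z : 'rV['rV[R]_n]_(n * n) * 'rV['rV[R]_n]_(n * n)) :=
  \sum_k tensor (z.1 ord0 k) (z.2 ord0 k).

Lemma sum_tensors_continuous : continuous sum_tensors.
Proof.
apply: continuous_sum => k; apply: tensor_continuous.
  by apply: entry_comp_continuous => z; exact: cvg_fst.
by apply: entry_comp_continuous => z; exact: cvg_snd.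
Qed.

Section BoundedPart.
(* An order unit g of K in K* and an interior point u of K bound both
   factors of the generators lying below a given level of phi_{g,u}. *)
Variables (g u : 'rV[R]_n) (e : R).
Hypotheses (g_dual : dualK g)
  (g_unit : forall x, K x -> forall i, `|x ord0 i| <= dot x g)
  (Ku : K u) (e_gt0 : 0 < e)
  (u_dom : forall y, dualK y -> forall i, e * `|y ord0 i| <= dot u y).

Definition level v := dot (tensor g u) v.

Lemma level_ge0 w : tensors w -> 0 <= level w.
Proof.
move=> [x [y [Kx Ky ->]]]; rewrite /level dot_tensors dotC.
by apply: mulr_ge0; [exact: g_dual | exact: Ky].
Qed.

Lemma tensor_normalize L w : tensors w -> level w <= L ->
  exists x y, [/\ (box L `&` K) x, (box e^-1 `&` dualK) y & w = tensor x y].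
Proof.
move=> [x [y [Kx Ky ->]]]; rewrite /level dot_tensors (dotC g) => hL.
have uy0 : 0 <= dot u y := Ky u Ku.
have [uy_eq0|uy_neq0] := eqVneq (dot u y) 0.
  have y0 : y = 0.
    apply/rowP => i; rewrite mxE; apply/normr0_eq0/le_anti.
    by rewrite normr_ge0 andbT -(ler_pM2l e_gt0) mulr0 -uy_eq0 u_dom.
  have L0 : 0 <= L by rewrite (le_trans _ hL) // uy_eq0 mulr0.
  exists 0, 0; split; rewrite ?y0 ?tensor0r //.
    by split; [apply/boxP => i; rewrite mxE normr0 | exact: K0].
  by split; [apply/boxP => i; rewrite mxE normr0 invr_ge0 ltW | exact: dualK0].
exists (dot u y *: x), ((dot u y)^-1 *: y); split; last by rewrite tensor_rescale.
- split; last exact: KZ.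
  apply/boxP => i; apply: (le_trans (g_unit _ (KZ _ _ uy0 Kx) i)).
  by rewrite dotZl mulrC.
- have Ky' : dualK ((dot u y)^-1 *: y) by apply: dualKZ; rewrite ?invr_ge0.
  split => //; apply/boxP => i; rewrite -(ler_pM2l e_gt0) mulfV ?gt_eqF //.
  by apply: (le_trans (u_dom _ Ky' i)); rewrite dotZr mulVf.
Qed.

Definition params L := families (box L `&` K) `*` families (box e^-1 `&` dualK).

Lemma params_compact L : compact (params L).
Proof.
have families_compact A : compact A -> compact (families A).
  by move=> cA; exact: (@rV_compact _ (n * n) (fun=> A) (fun=> cA)).
have box_compact b : compact (box b).
  exact: (@rV_compact _ n (fun=> `[- b, b]%classic) (fun=> @segment_compact R (- b) b)).
by apply: compact_setX; apply: families_compact; apply: compact_closedI;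
  [exact: box_compact | exact: Kcl | exact: box_compact | exact: dualK_closed].
Qed.

Lemma params_in_cone L z : params L z -> tensor_cone (sum_tensors z).
Proof.
move=> [/= zx zy]; exists (n * n)%N, (fun k => tensor (z.1 ord0 k) (z.2 ord0 k)).
split => // k; exists (z.1 ord0 k), (z.2 ord0 k).
by split => //; [case: (zx k) | case: (zy k)].
Qed.

Lemma bounded_part_params L v : tensor_cone v -> level v <= L ->
  exists2 z, params L z & v = sum_tensors z.
Proof.
move=> [N [s [Ss ->]]]; have [s' Ss' <-] := caratheodory tensors0 tensorsZ _ s Ss.
move=> hL.
have sL k : level (s' k) <= L.
  apply: (le_trans _ hL); rewrite /level dot_sumr (bigD1 k) //= lerDl.
  by apply: sumr_ge0 => j _; exact: level_ge0.
have [x hx] := fin_all_exists (fun k => tensor_normalize _ _ (Ss' k) (sL k)).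
have [y hy] := fin_all_exists hx.
exists (\row_k x k, \row_k y k).
  by split => k /=; rewrite mxE; case: (hy k).
by apply: eq_bigr => k _; rewrite !mxE; case: (hy k).
Qed.

(* Hence the cone is closed: near a point p of its closure it coincides
   with the continuous image of the compact set params L. *)
Lemma tensor_cone_closed_of_bounds : closed tensor_cone.
Proof.
move=> p p_cl; pose L := level p + 1.
have img_closed : closed (sum_tensors @` params L).
  apply: compact_closed; first exact: norm_hausdorff.
  apply: continuous_compact (params_compact L).
  exact: continuous_subspaceT sum_tensors_continuous.
have below : tensor_cone `&` [set v | level v < L] `<=` sum_tensors @` params L.
  by move=> v [Cv /ltW vL]; have [z Pz ->] := bounded_part_params _ _ Cv vL; exists z.
have [z Pz <-] : (sum_tensors @` params L) p.
  apply: img_closed; apply: (closureS below) => B pB.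
  have pU : nbhs p [set v | level v < L].
    apply: open_nbhs_nbhs; split; last by rewrite /= /L ltrDl.
    by have := (continuousP level).1 (dot_continuousl _) _ (@open_lt R L).
  have [q [Cq [Bq Uq]]] := p_cl _ (filterI pB pU).
  by exists q.
exact: params_in_cone Pz.
Qed.

End BoundedPart.

Lemma tensor_cone_closed : interior K !=set0 -> closed tensor_cone.
Proof.
move=> Kint; have [g g_dual g_unit] := dualK_order_unit.
have [u [e [Ku e0 u_dom]]] := interior_dominates Kint.
exact: (tensor_cone_closed_of_bounds _ _ _ g_dual g_unit Ku e0 u_dom).
Qed.

(* Duality step: a matrix A pairing nonnegatively with every positive
   operator lies in the tensor cone; otherwise a separating functional,
   read as an operator, would be positive (bipolar theorem) yet pair
   negatively with A. *)
Lemma positive_pairing_in_cone (A : 'M[R]_n) : interior K !=set0 ->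
  (forall M, (forall x, K x -> K (x *m M)) -> 0 <= dot (mxvec M) (mxvec A)) ->
  tensor_cone (mxvec A).
Proof.
move=> Kint A_pos; apply/not_notP => A_out.
have tensor_coneZ t v : 0 <= t -> tensor_cone v -> tensor_cone (t *: v).
  by move=> t0; apply: finsumsZ => w; exact: tensorsZ.
have [w [w_pos wA]] := cone_separation (tensor_cone_closed Kint) (finsums0 _)
  (@finsumsD _ _) tensor_coneZ _ A_out.
pose T : 'M[R]_n := vec_mx w.
have T_pos x : K x -> K (x *m T).
  move=> Kx; apply/not_notP => /bipolar [y Ky xTy].
  have : tensor_cone (tensor x y) by apply: finsums_gen; exists x, y.
  by move=> /w_pos; rewrite -(vec_mxK w) dot_tensor -/T; lra.
by have := A_pos T T_pos; rewrite /T vec_mxK; lra.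
Qed.

End Cones.

Lemma linfunE {R : realType} (U W : vectType R) (f : U -> W) (f_lin : linear f) u :
  linfun f u = f u.
Proof.
pose fL : {linear U -> W} := HB.pack f (GRing.isLinear.Build _ _ _ _ f f_lin).
exact: (lfunE fL u).
Qed.

Section Coordinates.
Context {R : realType} {n : nat}.
Local Notation X := 'rV[R]_n.

Definition op_of_mx (N : 'M[R]_n) : 'End(X) := linfun (fun x : X => x *m N).
Definition functional (y : X) : 'Hom(X, R^o) := linfun (fun x : X => (dot x y : R^o)).
Definition phi (x y : X) : 'Hom('End(X), R^o) :=
  linfun (fun M : 'End(X) => (functional y (M x) : R^o)).

Lemma op_of_mxE N x : op_of_mx N x = x *m N.
Proof. by rewrite linfunE // => a u v; rewrite mulmxDl scalemxAl. Qed.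

Lemma functionalE y x : functional y x = dot x y.
Proof. by rewrite linfunE // => a u v /=; rewrite dotDl dotZl. Qed.

Lemma phiE x y M : phi x y M = dot (M x) y.
Proof.
rewrite linfunE ?functionalE // => a u v /=.
by rewrite add_lfunE scale_lfunE linearP.
Qed.

Definition mx_of_op (M : 'End(X)) : 'M[R]_n := \matrix_(i, j) M (delta_mx 0 i) ord0 j.

Lemma mx_of_opK (M : 'End(X)) : op_of_mx (mx_of_op M) = M.
Proof.
apply/lfunP => x; rewrite op_of_mxE [in RHS](row_sum_delta x) linear_sum.
apply/rowP => j; rewrite summxE !mxE; apply: eq_bigr => i _.
by rewrite linearZ /= !mxE.
Qed.

Definition mx_of_functional (f : 'Hom('End(X), R^o)) : 'M[R]_n :=
  \matrix_(i, j) f (op_of_mx (delta_mx i j)).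

Lemma functional_op_of_mx (f : 'Hom('End(X), R^o)) N :
  f (op_of_mx N) = dot (mxvec N) (mxvec (mx_of_functional f)).
Proof.
have -> : op_of_mx N = \sum_i \sum_j N i j *: op_of_mx (delta_mx i j).
  apply/lfunP => x; rewrite op_of_mxE sum_lfunE {1}(matrix_sum_delta N) mulmx_sumr.
  apply: eq_bigr => i _; rewrite sum_lfunE mulmx_sumr; apply: eq_bigr => j _.
  by rewrite scale_lfunE op_of_mxE scalemxAr.
rewrite dot_mxvec linear_sum; apply: eq_bigr => i _; rewrite linear_sum.
by apply: eq_bigr => j _; rewrite linearZ /= mxE.
Qed.

End Coordinates.

Section Proposition.
Context {R : realType} {n : nat} {K : set 'rV[R]_n}.
Hypotheses (K0 : K 0) (KD : forall x y, K x -> K y -> K (x + y))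
  (KZ : forall (l : R) x, 0 <= l -> K x -> K (l *: x))
  (Kpt : forall x, K x -> K (- x) -> x = 0) (Kcl : closed K)
  (Kint : interior K !=set0).

Lemma dual_coneE y : dual_cone K (functional y) <-> dualK K y.
Proof. by split => h x Kx; have := h x Kx; rewrite functionalE. Qed.

Lemma dual_pos_ops_sum f : dual_cone (pos_ops K) f ->
  exists N (x y : 'I_N -> 'rV[R]_n), [/\ forall k, K (x k), forall k, dualK K (y k) &
    f = \sum_k phi (x k) (y k)].
Proof.
move=> f_pos; have : tensor_cone K (mxvec (mx_of_functional f)).
  apply: positive_pairing_in_cone => // M M_pos; rewrite -functional_op_of_mx.
  by apply: f_pos => x Kx; rewrite op_of_mxE; exact: M_pos.
move=> [N [s [Ss fE]]].
have [x hx] := fin_all_exists Ss; have [y hy] := fin_all_exists hx.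
exists N, x, y; split => [k|k|]; try by case: (hy k).
apply/lfunP => M; rewrite -[M]mx_of_opK functional_op_of_mx fE dot_sumr sum_lfunE.
apply: eq_bigr => k _; have [_ _ ->] := hy k.
by rewrite dot_tensor phiE op_of_mxE.
Qed.

(* A finite sum of the phi_{x,x'} lies in the convex hull of E: since E is a
   cone, rescale N terms by N+1 and pad with the zero functional. *)
Lemma sum_phi_conv N (x y : 'I_N -> 'rV[R]_n) :
  (forall k, K (x k)) -> (forall k, dualK K (y k)) ->
  conv_hull (E_set K) (\sum_k phi (x k) (y k)).
Proof.
move=> Kx Ky.
pose x' (k : 'I_N.+1) := if unlift ord_max k is Some j then N.+1%:R *: x j else 0.
pose y' (k : 'I_N.+1) := if unlift ord_max k is Some j then y j else 0.
exists N.+1, (fun=> N.+1%:R^-1), (fun k => phi (x' k) (y' k)); split.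
- by move=> k; rewrite invr_ge0 ler0n.
- by rewrite sumr_const card_ord -[_ *+ _]mulr_natl mulfV.
- move=> k; exists (x' k), (functional (y' k)); split => [||M].
  + by rewrite /x'; case: unlift => // j; apply: KZ.
  + by apply/dual_coneE; rewrite /y'; case: unlift => [j|]; [exact: Ky | exact: dualK0].
  + by rewrite phiE functionalE.
apply/lfunP => M; rewrite !sum_lfunE (bigD1_ord ord_max) //= scale_lfunE phiE.
rewrite /x' unlift_none linear0 dot0l scaler0 add0r; apply: eq_bigr => k _.
rewrite scale_lfunE !phiE /x' /y' liftK linearZ /= dotZl.
by rewrite -[RHS]/(N.+1%:R^-1 * (N.+1%:R * _)) mulrA mulVf ?mul1r // pnatr_eq0.
Qed.

Lemma conv_E_pos : conv_hull (E_set K) `<=` dual_cone (pos_ops K).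
Proof.
move=> _ [k [c [f [c0 _ Ef ->]]]] T T_pos.
rewrite sum_lfunE; apply: sumr_ge0 => i _; rewrite scale_lfunE.
have [x [x' [Kx x'_pos ->]]] := Ef i.
by apply: mulr_ge0 => //; apply: x'_pos; exact: T_pos.
Qed.

End Proposition.

Theorem proposition2p3 (R : realType) (n : nat) (K : set 'rV[R]_n) :
  is_cone K -> closed K -> (interior K) !=set0 ->
  dual_cone (pos_ops K) = conv_hull (E_set K).
Proof.
move=> [Kne KD KZ Kpt] Kcl Kint.
have K0 : K 0 by case: Kne => x Kx; rewrite -(scale0r x); exact: KZ.
apply/seteqP; split; last exact: conv_E_pos.
move=> f /(dual_pos_ops_sum K0 KD KZ Kpt Kcl Kint) [N [x [y [Kx Ky ->]]]].
exact: sum_phi_conv.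
Qed.
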